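(* Let $(X,\rho)$ be a metric space, $A\in CL(X)$ and $(A_k)\subset CL(X)$. Suppose that $f\colon[0,\infty)\to[0,\infty)$ is an unbounded modulus such that $\lim_{t\to\infty}\frac{f(t)}{t}>0$ and there is $c\in(0,\infty)$ with $f(xy)\ge c\,f(x)\,f(y)$ for all $x,y\in[0,\infty)$. Then: (i) if $(A_k)$ is Wijsman strongly Cesàro summable to $A$ with respect to $f$, then $(A_k)$ is $f$-Wijsman statistically convergent to $A$; (ii) if $(A_k)$ is Wijsman bounded and $f$-Wijsman statistically convergent to $A$, then $(A_k)$ is Wijsman strongly Cesàro summable to $A$ with respect to $f$.
   Context: A modulus is a function $f\colon[0,\infty)\to[0,\infty)$ such that $f(x)=0$ iff $x=0$, $f$ is subadditive, increasing and continuous. $CL(X)$ denotes the set of all non-empty closed subsets of $(X,\rho)$, and $d(x,B)=\inf_{y\in B}\rho(x,y)$. $(A_k)$ is Wijsman bounded if $\sup_k d(x,A_k)<\infty$ for each $x\in X$. For an unbounded modulus $f$ and $K\subseteq\mathbb N$, the $f$-density is $d^f(K)=\lim_{n\to\infty}\frac{f(|\{k\le n:k\in K\}|)}{f(n)}$ (when the limit exists). $(A_k)$ is $f$-Wijsman statistically convergent to $A$ if for every $x\in X$ and every $\varepsilon>0$ the set $\{k:|d(x,A_k)-d(x,A)|\ge\varepsilon\}$ has $f$-density $0$. $(A_k)$ is Wijsman strongly Cesàro summable to $A$ with respect to $f$ if $\lim_{n\to\infty}\frac1n\sum_{k=1}^n f(|d(x,A_k)-d(x,A)|)=0$ for every $x\in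 X$. *)

From Stdlib Require Import Reals ClassicalEpsilon.
From Coquelicot Require Import Coquelicot.
Open Scope R_scope.

Definition is_metric {X : Type} (rho : X -> X -> R) : Prop :=
  (forall x y, 0 <= rho x y) /\
  (forall x y, rho x y = 0 <-> x = y) /\
  (forall x y, rho x y = rho y x) /\
  (forall x y z, rho x z <= rho x y + rho y z).

Definition closed_set {X : Type} (rho : X -> X -> R) (B : X -> Prop) : Prop :=
  forall x, (forall eps, 0 < eps -> exists y, B y /\ rho x y < eps) -> B x.

Definition CL {X : Type} (rho : X -> X -> R) (B : X -> Prop) : Prop :=
  (exists y, B y) /\ closed_set rho B.

(* d(x,B) = inf_{y in B} rho(x,y)  (finite for non-empty B, as rho >= 0). *)
Definition dist_set {X : Type} (rho : X -> X -> R) (x : X) (B : X -> Prop) : R :=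
  real (Glb_Rbar (fun r => exists y, B y /\ r = rho x y)).

Definition modulus (f : R -> R) : Prop :=
  (forall x, 0 <= x -> 0 <= f x) /\
  (forall x, 0 <= x -> (f x = 0 <-> x = 0)) /\
  (forall x y, 0 <= x -> 0 <= y -> f (x + y) <= f x + f y) /\
  (forall x y, 0 <= x -> x <= y -> f x <= f y) /\
  (forall x, 0 <= x -> continuous (fun t => f (Rabs t)) x).

Definition unbounded_fun (f : R -> R) : Prop :=
  forall M, exists x, 0 <= x /\ M < f x.

(* |{k <= n : k in K}|, with k ranging over 1..n. *)
Fixpoint count_upto (K : nat -> Prop) (n : nat) : nat :=
  match n with
  | O => O
  | S m => (if excluded_middle_informative (K (S m)) then 1 else 0)%nat
           + count_upto K m
  end.

Definition f_density_zero (f : R -> R) (K : nat -> Prop) : Prop :=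
  is_lim_seq (fun n => f (INR (count_upto K n)) / f (INR n)) 0.

Definition wijsman_bounded {X : Type} (rho : X -> X -> R) (A_ : nat -> X -> Prop) : Prop :=
  forall x, exists M, forall k, (1 <= k)%nat -> dist_set rho x (A_ k) <= M.

Definition f_wijsman_stat_conv {X : Type} (rho : X -> X -> R) (f : R -> R)
  (A_ : nat -> X -> Prop) (A : X -> Prop) : Prop :=
  forall x eps, 0 < eps ->
    f_density_zero f
      (fun k => eps <= Rabs (dist_set rho x (A_ k) - dist_set rho x A)).

Definition wijsman_strong_cesaro {X : Type} (rho : X -> X -> R) (f : R -> R)
  (A_ : nat -> X -> Prop) (A : X -> Prop) : Prop :=
  forall x,
    is_lim_seq (fun n => / INR n *
      sum_n_m (fun k => f (Rabs (dist_set rho x (A_ k) - dist_set rho x A))) 1 n) 0.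

(** Subadditivity gives [f n <= n f(1)], and [f t / t -> L > 0] gives [f t >= l t] for
    large [t]; so [f] is comparable to the identity at infinity, and a set of indices
    has [f]-density zero iff it has natural density zero.  Part (i) is then Markov's
    inequality for the Cesàro means of [f |d(x,A_k) - d(x,A)|].  For part (ii), split
    the indices at a threshold [e]: the terms above it are bounded by Wijsman
    boundedness and have density zero, those below it are at most [f e], which is
    small by continuity of [f] at [0]. *)

From Stdlib Require Import Reals Lra Lia ClassicalEpsilon.
From Coquelicot Require Import Coquelicot.
Open Scope R_scope.

Definition cesaro_mean (g : nat -> R) (n : nat) : R := / INR n * sum_n_m g 1 n.

Definition count_ratio (K : nat -> Prop) (n : nat) : R := INR (count_upto K n) / INR n.

Lemma Rinv_INR_ge0 n : 0 <= / INR n.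
Proof.
  destruct n as [|n]; [simpl; rewrite Rinv_0; lra|].
  left; apply Rinv_0_lt_compat, lt_0_INR; lia.
Qed.

Lemma cesaro_mean_ge0 (g : nat -> R) n : (forall k, 0 <= g k) -> 0 <= cesaro_mean g n.
Proof.
  intros g_ge0; apply Rmult_le_pos; [apply Rinv_INR_ge0|].
  apply (Rle_trans _ (sum_n_m (fun _ => zero) 1 n)).
  - rewrite sum_n_m_const_zero; apply Rle_refl.
  - apply sum_n_m_le, g_ge0.
Qed.

Lemma eventually_INR_gt T : eventually (fun n => T < INR n).
Proof.
  destruct (INR_unbounded T) as [N HN].
  exists N; intros n Nn.
  pose proof (le_INR _ _ Nn); lra.
Qed.

Lemma is_lim_seq_Rinv_INR : is_lim_seq (fun n => / INR n) 0.
Proof. exact (is_lim_seq_inv _ _ is_lim_seq_INR ltac:(discriminate)). Qed.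

Lemma is_lim_seq_scal_l_0 (u : nat -> R) a :
  is_lim_seq u 0 -> is_lim_seq (fun n => a * u n) 0.
Proof. intros u0; rewrite <- (Rbar_mult_0_r a); exact (is_lim_seq_scal_l _ _ _ u0). Qed.

Lemma sum_n_m_ge_count (g : nat -> R) (K : nat -> Prop) a n :
  (forall k, (1 <= k)%nat -> 0 <= g k) ->
  (forall k, (1 <= k)%nat -> K k -> a <= g k) ->
  a * INR (count_upto K n) <= sum_n_m g 1 n.
Proof.
  intros g_ge0 g_ge_a.
  induction n as [|n IHn].
  - rewrite sum_n_m_zero by lia; simpl; change zero with 0; lra.
  - rewrite sum_n_Sm by lia; cbn [count_upto]; change plus with Rplus.
    destruct (excluded_middle_informative (K (S n))) as [HK|HK].
    + rewrite plus_INR; simpl (INR 1).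
      pose proof (g_ge_a (S n) ltac:(lia) HK); lra.
    + rewrite Nat.add_0_l.
      pose proof (g_ge0 (S n) ltac:(lia)); lra.
Qed.

Lemma sum_n_m_le_count (g : nat -> R) (K : nat -> Prop) B e n :
  0 <= e ->
  (forall k, (1 <= k)%nat -> K k -> g k <= B) ->
  (forall k, (1 <= k)%nat -> ~ K k -> g k <= e) ->
  sum_n_m g 1 n <= B * INR (count_upto K n) + e * INR n.
Proof.
  intros e_ge0 g_le_B g_le_e.
  induction n as [|n IHn].
  - rewrite sum_n_m_zero by lia; simpl; change zero with 0; lra.
  - rewrite sum_n_Sm by lia; cbn [count_upto]; change plus with Rplus.
    rewrite S_INR.
    destruct (excluded_middle_informative (K (S n))) as [HK|HK].
    + rewrite plus_INR; simpl (INR 1).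
      pose proof (g_le_B (S n) ltac:(lia) HK); lra.
    + rewrite Nat.add_0_l.
      pose proof (g_le_e (S n) ltac:(lia) HK); lra.
Qed.

Lemma dist_set_ge0 {X : Type} (rho : X -> X -> R) x B :
  (forall x y, 0 <= rho x y) -> 0 <= dist_set rho x B.
Proof.
  intros rho_ge0; unfold dist_set.
  destruct (Glb_Rbar_correct (fun r => exists y, B y /\ r = rho x y)) as [_ glb_greatest].
  assert (Hglb : Rbar_le 0 (Glb_Rbar (fun r => exists y, B y /\ r = rho x y))).
  { apply glb_greatest; intros r [y [_ ->]]; apply rho_ge0. }
  destruct (Glb_Rbar _); simpl in *; lra.
Qed.

Lemma ratio_lim_pos_linear_lower (f : R -> R) :
  (exists L : Rbar, Rbar_lt 0 L /\ is_lim (fun t => f t / t) p_infty L) ->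
  exists l T, 0 < l /\ 0 <= T /\ forall t, T < t -> l * t <= f t.
Proof.
  intros (L & L_gt0 & f_lim).
  assert (exists l, 0 < l /\ Rbar_lt l L) as (l & l_gt0 & l_lt_L).
  { destruct L as [r| |]; simpl in L_gt0 |- *; try contradiction.
    - exists (r / 2); lra.
    - exists 1; lra. }
  destruct (f_lim _ (open_Rbar_gt' _ _ l_lt_L)) as [M HM].
  exists l, (Rmax M 0); repeat split; [lra|apply Rmax_r|].
  intros t Ht.
  pose proof (Rmax_l M 0); pose proof (Rmax_r M 0).
  specialize (HM t ltac:(lra)); simpl in HM.
  apply Rlt_div_r in HM; lra.
Qed.

Section Modulus.

Variable f : R -> R.
Hypothesis f_modulus : modulus f.

Lemma modulus_ge0 x : 0 <= x -> 0 <= f x.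
Proof. apply f_modulus. Qed.

Lemma modulus0 : f 0 = 0.
Proof. apply f_modulus; lra. Qed.

Lemma modulus_gt0 x : 0 < x -> 0 < f x.
Proof.
  intros x_gt0.
  assert (f x <> 0) by (intros fx0; apply (proj1 (proj2 f_modulus) x) in fx0; lra).
  pose proof (modulus_ge0 x); lra.
Qed.

Lemma modulus_le x y : 0 <= x -> x <= y -> f x <= f y.
Proof. apply f_modulus. Qed.

Lemma modulus_INR_le n : f (INR n) <= INR n * f 1.
Proof.
  induction n as [|n IHn].
  - simpl; rewrite modulus0; lra.
  - rewrite S_INR.
    pose proof (proj1 (proj2 (proj2 f_modulus)) (INR n) 1 (pos_INR n) ltac:(lra)).
    lra.
Qed.

Lemma modulus_small eps : 0 < eps -> exists e, 0 < e /\ f e < eps.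
Proof.
  intros eps_gt0.
  pose proof (proj2 (proj2 (proj2 (proj2 f_modulus))) 0 (Rle_refl 0)) as cont0.
  apply continuity_pt_filterlim in cont0.
  destruct (cont0 eps eps_gt0) as (del & del_gt0 & Hdel).
  assert (Hhalf : R_dist (f (Rabs (del / 2))) (f (Rabs 0)) < eps).
  { apply Hdel; split; [split; [exact I|lra]|].
    simpl; unfold R_dist; rewrite Rminus_0_r, Rabs_pos_eq; lra. }
  exists (del / 2); split; [lra|].
  unfold R_dist in Hhalf.
  rewrite Rabs_R0, (Rabs_pos_eq (del / 2)), modulus0, Rminus_0_r in Hhalf by lra.
  apply Rabs_def2 in Hhalf; lra.
Qed.

Variables l T : R.
Hypothesis l_gt0 : 0 < l.
Hypothesis T_ge0 : 0 <= T.
Hypothesis f_ge_linear : forall t, T < t -> l * t <= f t.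

Lemma f_density_zero_of_count_ratio K :
  is_lim_seq (count_ratio K) 0 -> f_density_zero f K.
Proof.
  intros dens0; unfold f_density_zero.
  apply (is_lim_seq_le_le_loc (fun _ => 0) _
           (fun n => f 1 / l * count_ratio K n)).
  - destruct (eventually_INR_gt T) as [N HN]; exists N; intros n Nn.
    specialize (HN n Nn).
    unfold count_ratio; set (c := INR (count_upto K n)).
    assert (c_ge0 : 0 <= c) by apply pos_INR.
    assert (fn_ge : l * INR n <= f (INR n)) by auto.
    assert (fc_le : f c <= c * f 1) by apply modulus_INR_le.
    assert (fc_ge0 : 0 <= f c) by (apply modulus_ge0; lra).
    split.
    + apply Rdiv_le_0_compat; nra.
    + unfold Rdiv.
      replace (f 1 * / l * (c * / INR n)) with (c * f 1 * / (l * INR n)) by (field; lra).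
      apply Rmult_le_compat; [lra | left; apply Rinv_0_lt_compat; nra | lra |].
      apply Rinv_le_contravar; nra.
  - apply is_lim_seq_const.
  - apply is_lim_seq_scal_l_0, dens0.
Qed.

Lemma count_ratio_lim0_of_f_density_zero K :
  f_density_zero f K -> is_lim_seq (count_ratio K) 0.
Proof.
  intros fdens0.
  apply (is_lim_seq_le_le_loc (fun _ => 0) _
    (fun n => T * / INR n + f 1 / l * (f (INR (count_upto K n)) / f (INR n)))).
  - exists 1%nat; intros n n_ge1.
    unfold count_ratio; set (c := INR (count_upto K n)).
    assert (c_ge0 : 0 <= c) by apply pos_INR.
    assert (n_gt0 : 0 < INR n) by (apply lt_0_INR; lia).
    assert (fn_gt0 : 0 < f (INR n)) by (apply modulus_gt0; lra).
    assert (fc_ge0 : 0 <= f c) by (apply modulus_ge0; lra).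
    assert (c_le : c <= T + f c / l).
    { destruct (Rle_or_lt c T) as [c_le_T|T_lt_c].
      - pose proof (Rdiv_le_0_compat _ _ fc_ge0 l_gt0); lra.
      - assert (c <= f c / l) by (apply Rle_div_r; [lra|]; rewrite Rmult_comm; auto).
        pose proof (Rdiv_le_0_compat _ _ fc_ge0 l_gt0); lra. }
    assert (inv_n_le : / INR n <= f 1 / f (INR n)).
    { apply Rle_div_r; [lra|].
      pose proof (modulus_INR_le n).
      replace (/ INR n * f (INR n)) with (f (INR n) / INR n) by (field; lra).
      apply Rle_div_l; lra. }
    split.
    + apply Rdiv_le_0_compat; lra.
    + unfold Rdiv.
      apply (Rle_trans _ ((T + f c / l) * / INR n)).
      * apply Rmult_le_compat_r; [apply Rinv_INR_ge0 | exact c_le].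
      * rewrite Rmult_plus_distr_r.
        apply Rplus_le_compat_l.
        replace (f 1 * / l * (f c * / f (INR n))) with (f c / l * (f 1 / f (INR n)))
          by (field; lra).
        apply Rmult_le_compat_l; [apply Rdiv_le_0_compat|]; lra.
  - apply is_lim_seq_const.
  - rewrite <- (Rplus_0_l 0).
    apply is_lim_seq_plus'.
    + apply is_lim_seq_scal_l_0, is_lim_seq_Rinv_INR.
    + apply is_lim_seq_scal_l_0, fdens0.
Qed.

Lemma f_stat_of_strong_cesaro (u : nat -> R) :
  (forall k, 0 <= u k) ->
  is_lim_seq (cesaro_mean (fun k => f (u k))) 0 ->
  forall eps, 0 < eps -> f_density_zero f (fun k => eps <= u k).
Proof.
  intros u_ge0 mean0 eps eps_gt0.
  apply f_density_zero_of_count_ratio.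
  set (K := fun k => eps <= u k).
  assert (feps_gt0 : 0 < f eps) by (apply modulus_gt0; exact eps_gt0).
  assert (markov : forall n,
    f eps * count_ratio K n <= cesaro_mean (fun k => f (u k)) n).
  { intros n; unfold cesaro_mean, count_ratio, Rdiv.
    rewrite <- Rmult_assoc, (Rmult_comm (/ INR n)).
    apply Rmult_le_compat_r; [apply Rinv_INR_ge0|].
    apply sum_n_m_ge_count; intros k _.
    - apply modulus_ge0, u_ge0.
    - intros Kk; apply modulus_le; [lra | exact Kk]. }
  apply (is_lim_seq_le_le (fun _ => 0) _
           (fun n => / f eps * cesaro_mean (fun k => f (u k)) n)).
  - intros n; split.
    + apply Rmult_le_pos; [apply pos_INR | apply Rinv_INR_ge0].
    + apply (Rmult_le_reg_l (f eps)); [exact feps_gt0|].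
      rewrite <- Rmult_assoc, Rinv_r, Rmult_1_l by lra.
      apply markov.
  - apply is_lim_seq_const.
  - apply is_lim_seq_scal_l_0, mean0.
Qed.

Lemma cesaro_mean_le_count_ratio (u : nat -> R) B e n :
  (forall k, 0 <= u k) -> (forall k, (1 <= k)%nat -> u k <= B) -> 0 < e -> (1 <= n)%nat ->
  cesaro_mean (fun k => f (u k)) n
    <= f B * count_ratio (fun k => e <= u k) n + f e.
Proof.
  intros u_ge0 u_le_B e_gt0 n_ge1.
  assert (n_gt0 : 0 < INR n) by (apply lt_0_INR; lia).
  assert (sum_le := sum_n_m_le_count (fun k => f (u k)) (fun k => e <= u k) (f B) (f e) n
    (modulus_ge0 e ltac:(lra))
    (fun k k_ge1 _ => modulus_le _ _ (u_ge0 k) (u_le_B k k_ge1))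
    (fun k _ not_e_le => modulus_le _ _ (u_ge0 k) (Rlt_le _ _ (Rnot_le_lt _ _ not_e_le)))).
  unfold cesaro_mean, count_ratio.
  replace (f B * (INR (count_upto (fun k => e <= u k) n) / INR n) + f e)
    with (/ INR n * (f B * INR (count_upto (fun k => e <= u k) n) + f e * INR n))
    by (field; lra).
  apply Rmult_le_compat_l; [apply Rinv_INR_ge0 | exact sum_le].
Qed.

Lemma strong_cesaro_of_f_stat (u : nat -> R) B :
  (forall k, 0 <= u k) -> (forall k, (1 <= k)%nat -> u k <= B) ->
  (forall eps, 0 < eps -> f_density_zero f (fun k => eps <= u k)) ->
  is_lim_seq (cesaro_mean (fun k => f (u k))) 0.
Proof.
  intros u_ge0 u_le_B f_stat.
  apply is_lim_seq_spec; intros eps.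
  destruct (modulus_small (eps / 2)) as (e & e_gt0 & fe_small);
    [pose proof (cond_pos eps); lra|].
  assert (dens0 := is_lim_seq_scal_l_0 _ (f B)
                     (count_ratio_lim0_of_f_density_zero _ (f_stat e e_gt0))).
  apply is_lim_seq_spec in dens0.
  destruct (dens0 (pos_div_2 eps)) as [N HN].
  exists (max N 1); intros n Nn.
  specialize (HN n ltac:(lia)); simpl in HN.
  pose proof (cesaro_mean_le_count_ratio u B e n u_ge0 u_le_B e_gt0 ltac:(lia)) as mean_le.
  assert (mean_ge0 := cesaro_mean_ge0 _ n (fun k => modulus_ge0 _ (u_ge0 k))).
  rewrite Rminus_0_r, Rabs_pos_eq by exact mean_ge0.
  rewrite Rminus_0_r in HN; apply Rabs_def2 in HN; lra.
Qed.

End Modulus.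

Theorem theorem4p7 (X : Type) (rho : X -> X -> R) (A : X -> Prop)
  (A_ : nat -> X -> Prop) (f : R -> R) (c : R) :
  is_metric rho ->
  CL rho A ->
  (forall k, (1 <= k)%nat -> CL rho (A_ k)) ->
  modulus f ->
  unbounded_fun f ->
  (exists L : Rbar, Rbar_lt 0 L /\ is_lim (fun t => f t / t) p_infty L) ->
  0 < c ->
  (forall x y, 0 <= x -> 0 <= y -> c * f x * f y <= f (x * y)) ->
  (wijsman_strong_cesaro rho f A_ A -> f_wijsman_stat_conv rho f A_ A) /\
  (wijsman_bounded rho A_ -> f_wijsman_stat_conv rho f A_ A ->
     wijsman_strong_cesaro rho f A_ A).
Proof.
  intros rho_metric _ _ f_modulus _ f_ratio_lim _ _.
  destruct (ratio_lim_pos_linear_lower f f_ratio_lim) as (l & T & l_gt0 & T_ge0 & f_ge_linear).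
  assert (rho_ge0 : forall x y, 0 <= rho x y) by apply rho_metric.
  split.
  - intros cesaro x.
    exact (f_stat_of_strong_cesaro f f_modulus l T l_gt0 T_ge0 f_ge_linear _
             (fun k => Rabs_pos _) (cesaro x)).
  - intros bounded stat x.
    destruct (bounded x) as [M HM].
    apply (strong_cesaro_of_f_stat f f_modulus l T l_gt0 T_ge0 f_ge_linear _
             (M + dist_set rho x A) (fun k => Rabs_pos _)).
    + intros k k_ge1.
      pose proof (HM k k_ge1); pose proof (dist_set_ge0 rho x (A_ k) rho_ge0).
      pose proof (dist_set_ge0 rho x A rho_ge0).
      apply Rabs_le; lra.
    + exact (stat x).
Qed.
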